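(* Let $K$ be an infinite field with $\mathrm{char}(K)\neq 2$. Let $Q\in\mathcal{Q}(n,d,m)$ and let $h$ be a closed path in $Q$ with $h\not\equiv 0$. Then $\deg(h)\leq M(n,d,m)$, where $M(n,d,m)=2n$ if $n=m$ and $d\in\{n,n+1\}$, and $M(n,d,m)=3n$ otherwise.
   Context: A quiver $Q$ is a finite oriented graph; for an arrow $a$, $a''$ is its tail and $a'$ its head. A path $a=a_1\cdots a_s$ ($a_i$ arrows) satisfies $a_i'=a_{i+1}''$; it is closed (in the vertex $a_1''$) if $a_1''=a_s'$; $\deg(a)=s$, $a''=a_1''$, $a'=a_s'$, $V(a)=\{a_1'',a_1',\dots,a_s'\}$. A closed path $a$ is primitive if for every $w\in V(a)$ exactly one $i$ has $a_i'=w$. $m(Q)$ is the maximal degree of a primitive closed path in $Q$; $Q$ is strongly connected if some closed path contains all vertices; $\mathcal{Q}(n,d,m)$ is the set of strongly connected quivers with $n$ vertices, $d$ arrows and $m(Q)=m$. Closed paths are incident if they are closed paths in the same vertex. The equivalence $\equiv$ is the equivalence relation on the set of closed paths of $Q$ together with the symbol $0$ (elements taken up to sign, with $-0=0$) generated by: (1) $ab\equiv ba$ for paths $a,b$ such that $ab$ is a closed path; (2) $a_{\sigma(1)}\cdots a_{\sigma(t)}\equiv \mathrm{sign}(\sigma)\,a_1\cdots a_t$ for incident closed paths $a_1,\dots,a_t$, $t\geq2$, $\sigma\in S_t$; (3) $a_1^2a_2\equiv0$ for incident closed paths $a_1,a_2$; (4) if $\mathrm{char}(K)=2$ then $a_1^2\equiv0$,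 and if $\mathrm{char}(K)\neq2$ then $a_1a_2a_3a_4\equiv0$, for incident closed paths $a_1,\dots,a_4$. *)

From HB Require Import structures.
From mathcomp Require Import all_boot all_order all_algebra all_fingroup.
From Stdlib Require Import Relations.
Set Implicit Arguments. Unset Strict Implicit. Unset Printing Implicit Defensive.

(* A quiver with vertex set 'I_n and arrow set 'I_d; for an arrow a,
   tl a = a'' (tail) and hd a = a' (head). *)
Record quiver (n d : nat) := Quiver { tl : 'I_d -> 'I_n; hd : 'I_d -> 'I_n }.

Section QuiverDefs.
Variables (n d : nat) (Q : quiver n d).

Definition is_path (p : seq 'I_d) : bool :=
  if p is a :: p' then path (fun x y => hd Q x == tl Q y) a p' else false.

Definition ptail (p : seq 'I_d) : option 'I_n :=
  if p is a :: _ then Some (tl Q a) else None.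

Definition closedp (p : seq 'I_d) : bool :=
  if p is a :: p' then is_path p && (hd Q (last a p') == tl Q a) else false.

Definition closed_at (v : 'I_n) (p : seq 'I_d) : bool :=
  closedp p && (ptail p == Some v).

Definition deg (p : seq 'I_d) : nat := size p.

Definition Vset (p : seq 'I_d) : seq 'I_n :=
  if p is a :: _ then tl Q a :: map (hd Q) p else [::].

Definition primitive (p : seq 'I_d) : bool :=
  closedp p && all (fun w => count (fun a => hd Q a == w) p == 1%N) (Vset p).

Definition strongly_connected : Prop :=
  exists p, closedp p /\ forall v : 'I_n, v \in Vset p.

Definition mQ_is (m : nat) : Prop :=
  (exists p, primitive p /\ deg p = m) /\
  (forall p, primitive p -> deg p <= m).

Definition in_Qndm (m : nat) : Prop := strongly_connected /\ mQ_is m.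

(* closedp paths (with a sign) together with the symbol 0 *)
Inductive selt := Zero | Sgn of bool & seq 'I_d.  (* Sgn true p = - p *)

Definition sneg (x : selt) : selt :=
  match x with Zero => Zero | Sgn b p => Sgn (~~ b) p end.

(* generating relations of the equivalence; char2 = (char K == 2) *)
Inductive qstep (char2 : bool) : selt -> selt -> Prop :=
| qs_rot (a b : seq 'I_d) :
    is_path a -> is_path b -> closedp (a ++ b) ->
    qstep char2 (Sgn false (a ++ b)) (Sgn false (b ++ a))
| qs_perm (v : 'I_n) (t : nat) (a : 'I_t -> seq 'I_d) (s : 'S_t) :
    (2 <= t)%N -> (forall i, closed_at v (a i)) ->
    qstep char2 (Sgn false (flatten [seq a (s i) | i <- enum 'I_t]))
                (Sgn (odd_perm s) (flatten [seq a i | i <- enum 'I_t]))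
| qs_sq (v : 'I_n) (a1 a2 : seq 'I_d) :
    closed_at v a1 -> closed_at v a2 ->
    qstep char2 (Sgn false (a1 ++ a1 ++ a2)) Zero
| qs_char2 (v : 'I_n) (a1 : seq 'I_d) :
    char2 -> closed_at v a1 ->
    qstep char2 (Sgn false (a1 ++ a1)) Zero
| qs_four (v : 'I_n) (a1 a2 a3 a4 : seq 'I_d) :
    ~~ char2 -> closed_at v a1 -> closed_at v a2 -> closed_at v a3 ->
    closed_at v a4 ->
    qstep char2 (Sgn false (a1 ++ a2 ++ a3 ++ a4)) Zero
| qs_neg (x y : selt) : qstep char2 x y -> qstep char2 (sneg x) (sneg y).

Definition qequiv (K : fieldType) : relation selt :=
  clos_refl_sym_trans selt (qstep (2 \in [pchar K]%R)%N).

End QuiverDefs.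

Definition Mbound (n d m : nat) : nat :=
  if (n == m) && ((d == n) || (d == n.+1)) then 2 * n else 3 * n.

From HB Require Import structures.
From mathcomp Require Import all_boot all_order all_algebra all_fingroup.
From Stdlib Require Import Relations.
Set Implicit Arguments. Unset Strict Implicit. Unset Printing Implicit Defensive.

(* If h enters a vertex v four times, a rotation of h is a product of four closed
   paths at v and vanishes by relation (4); pigeonhole over the n vertices gives 3n.
   If m = n and d <= n + 1, then Q is a Hamiltonian cycle C plus at most one more
   arrow, ending at some w.  A closed path inside C runs around all of C, so every
   closed path enters w; hence if h enters some vertex three times, it enters w three
   times.  Rotated to w, h is a product of three closed paths at w, each entering w
   only at its end.  Every vertex but w has a unique incoming arrow, so such a path
   is determined by its last arrow, of which there are at most two choices; two of the
   three pieces coincide and relation (3) kills h.  Pigeonhole then gives 2n. *)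

Section Paths.
Variables (n d : nat) (Q : quiver n d).

Definition pend (p : seq 'I_d) : option 'I_n :=
  if p is a :: p' then Some (hd Q (last a p')) else None.

Definition visits (v : 'I_n) (p : seq 'I_d) : nat := count (fun a => hd Q a == v) p.

Lemma rcons_neq_nil (s : seq 'I_d) x : rcons s x != [::].
Proof. by case: s. Qed.

Lemma ptail_cat a b : a != [::] -> ptail Q (a ++ b) = ptail Q a.
Proof. by case: a. Qed.

Lemma pend_cat a b : b != [::] -> pend (a ++ b) = pend b.
Proof. by case: b => // y b _; case: a => //= x a; rewrite last_cat. Qed.

Lemma pend_rcons s x : pend (rcons s x) = Some (hd Q x).
Proof. by case: s => //= y s; rewrite last_rcons. Qed.

Lemma is_path_neq_nil p : is_path Q p -> p != [::].
Proof. by case: p. Qed.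

Lemma is_path_cat a b : a != [::] -> b != [::] ->
  is_path Q (a ++ b) = [&& is_path Q a, is_path Q b & pend a == ptail Q b].
Proof.
case: a => // x a _; case: b => // y b _ /=.
by rewrite cat_path /=; case: (path _ x a) => //=; rewrite andbC.
Qed.

Lemma closedpE p : closedp Q p = is_path Q p && (pend p == ptail Q p).
Proof. by case: p. Qed.

Lemma closed_atE v p :
  closed_at Q v p = [&& is_path Q p, ptail Q p == Some v & pend p == Some v].
Proof.
rewrite /closed_at closedpE; case: (is_path Q p) => //=.
by case: (ptail Q p == Some v) / eqP => [->|]; rewrite ?andbT ?andbF.
Qed.

Lemma closed_at_closedp v p : closed_at Q v p -> closedp Q p.
Proof. by case/andP. Qed.

Lemma closed_at_path v p : closed_at Q v p -> is_path Q p.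
Proof. by rewrite closed_atE => /and3P[]. Qed.

Lemma closed_at_cat v a b :
  closed_at Q v a -> closed_at Q v b -> closed_at Q v (a ++ b).
Proof.
move=> a_closed b_closed; have a0 := is_path_neq_nil (closed_at_path a_closed).
have b0 := is_path_neq_nil (closed_at_path b_closed).
move: a_closed b_closed; rewrite !closed_atE is_path_cat // ptail_cat // pend_cat //.
by case/and3P=> -> /eqP-> /eqP-> /and3P[-> /eqP-> /eqP->]; rewrite !eqxx.
Qed.

Lemma visits_cat v a b : visits v (a ++ b) = visits v a + visits v b.
Proof. exact: count_cat. Qed.

Lemma closedp_visits_tl p y : closedp Q p -> y \in p -> 0 < visits (tl Q y) p.
Proof.
rewrite /visits -has_count.
case: p => // x p /andP[xp_path xp_end] /(nthP x) [[|i] ltip <-].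
  by apply/hasP; exists (last x p); [exact: mem_last | exact: xp_end].
apply/hasP; exists (nth x (x :: p) i); first exact/mem_nth/ltnW.
exact: (pathP x xp_path).
Qed.

Lemma sum_visits p : \sum_(v : 'I_n) visits v p = size p.
Proof.
rewrite /visits; under eq_bigr do rewrite -sum1_count.
rewrite (exchange_big_dep xpredT) //= -sum1_size; apply: eq_bigr => a _.
by rewrite (big_pred1 (hd Q a)) // => v; rewrite eq_sym.
Qed.

Lemma visits_pigeonhole k p : k * n < size p -> exists v, k < visits v p.
Proof.
move=> lt_kn_p; apply/existsP; apply: contraLR lt_kn_p; rewrite negb_exists -leqNgt.
move=> /forallP le_visits; rewrite -sum_visits.
have -> : k * n = \sum_(v : 'I_n) k by rewrite sum_nat_const card_ord mulnC.
by apply: leq_sum => v _; rewrite leqNgt le_visits.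
Qed.

Lemma closed_at_visits1 w a : closed_at Q w a -> visits w a = 1 ->
  exists p y, [/\ a = rcons p y, hd Q y = w & all (fun x => hd Q x != w) p].
Proof.
case/lastP: a => [|p y]; first by rewrite closed_atE.
rewrite closed_atE pend_rcons => /and3P[_ _ /eqP[hd_y]].
rewrite -cats1 visits_cat /= hd_y eqxx addn1 => -[/eqP].
rewrite -[_ == 0]negbK -lt0n /visits -has_count -all_predC => p_w.
by exists p, y; rewrite cats1.
Qed.

End Paths.

Section Equivalence.
Variables (n d : nat) (Q : quiver n d) (char2 : bool).
Local Notation qeq := (clos_refl_sym_trans (selt d) (qstep Q char2)).
Local Notation visits := (visits Q).

Lemma qeq_rot a b : is_path Q a -> is_path Q b -> closedp Q (a ++ b) ->
  qeq (Sgn false (a ++ b)) (Sgn false (b ++ a)).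
Proof. by move=> *; apply/rst_step/qs_rot. Qed.

Lemma split_closed_at v h : closed_at Q v h -> 1 < visits v h ->
  exists a b, [/\ h = a ++ b, closed_at Q v a, closed_at Q v b & visits v a = 1].
Proof.
move=> h_closed gt1; have has_v : has (fun a => hd Q a == v) h.
  by rewrite has_count; apply: ltn_trans gt1.
move: h_closed gt1; case: (split_find has_v) => x s1 s2 hd_x s1_v h_closed gt1.
have visits_x : visits v (rcons s1 x) = 1.
  rewrite -cats1 visits_cat /= hd_x /(visits) /=.
  by move: s1_v; rewrite has_count lt0n negbK => /eqP->.
have s2_0 : s2 != [::] by case: s2 h_closed gt1 => //; rewrite cats0 visits_x.
move: h_closed; rewrite closed_atE is_path_cat ?rcons_neq_nil //.
rewrite ptail_cat ?rcons_neq_nil // pend_cat // pend_rcons (eqP hd_x).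
case/and3P=> /and3P[s1x_path s2_path /eqP ptail_s2] ptail_s1x pend_s2.
exists (rcons s1 x), s2; split=> //; rewrite closed_atE.
- by rewrite s1x_path ptail_s1x pend_rcons (eqP hd_x) eqxx.
- by rewrite s2_path -ptail_s2 pend_s2 eqxx.
Qed.

Lemma split3_closed_at v h : closed_at Q v h -> 2 < visits v h ->
  exists a1 a2 a3, [/\ h = a1 ++ a2 ++ a3, [/\ closed_at Q v a1, closed_at Q v a2
     & closed_at Q v a3] & visits v a1 = 1 /\ visits v a2 = 1].
Proof.
move=> h_closed gt2.
have [a1 [r [h_eq a1_closed r_closed visits_a1]]] := split_closed_at h_closed (ltnW gt2).
rewrite h_eq visits_cat visits_a1 in gt2 *.
have [a2 [a3 [-> a2_closed a3_closed visits_a2]]] := split_closed_at r_closed gt2.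
by exists a1, a2, a3.
Qed.

Lemma rotate_closed_at v h : closedp Q h -> 0 < visits v h ->
  exists h', [/\ closed_at Q v h', forall u, visits u h' = visits u h
     & qeq (Sgn false h) (Sgn false h')].
Proof.
move=> h_closed gt0; have has_v : has (fun a => hd Q a == v) h by rewrite has_count.
move: h_closed; case: (split_find has_v) => x s1 s2 hd_x _ h_closed.
have [s2_nil | s2_0] := eqVneq s2 [::].
  subst s2; exists (rcons s1 x); rewrite cats0 in h_closed *; split=> //.
    move: (h_closed); rewrite /closed_at closedpE pend_rcons => /andP[-> /eqP <-].
    by rewrite (eqP hd_x) !eqxx.
  exact: rst_refl.
move: (h_closed); rewrite closedpE is_path_cat ?rcons_neq_nil //.
rewrite pend_cat // ptail_cat ?rcons_neq_nil //.
case/andP=> /and3P[s1x_path s2_path /eqP s1x_s2] s2_s1x.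
exists (s2 ++ rcons s1 x); split; last exact: qeq_rot.
- rewrite closed_atE is_path_cat ?rcons_neq_nil // s1x_path s2_path.
  rewrite ptail_cat // pend_cat ?rcons_neq_nil // -s1x_s2 pend_rcons (eqP hd_x).
  by rewrite s2_s1x !eqxx.
- by move=> u; rewrite !visits_cat addnC.
Qed.

Lemma qeq0_visits4 v h : ~~ char2 -> closedp Q h -> 3 < visits v h ->
  qeq (Sgn false h) (Zero d).
Proof.
move=> not_char2 h_closed gt3.
have [h' [h'_closed visits_h' h_h']] := rotate_closed_at h_closed (ltnW (ltnW (ltnW gt3))).
apply: rst_trans h_h' _; rewrite -visits_h' in gt3.
have [a1 [a2 [r [h'_eq [a1_closed a2_closed r_closed] [visits_a1 visits_a2]]]]] :=
  split3_closed_at h'_closed (ltnW gt3).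
rewrite h'_eq !visits_cat visits_a1 visits_a2 in gt3 *.
have [a3 [a4 [-> a3_closed a4_closed _]]] := split_closed_at r_closed gt3.
exact/rst_step/(qs_four not_char2 a1_closed a2_closed a3_closed a4_closed).
Qed.

(* Relation (3) kills a1^2 a2; the other two coincidences are rotated into that shape. *)
Lemma qeq0_repeated v a1 a2 a3 :
  closed_at Q v a1 -> closed_at Q v a2 -> closed_at Q v a3 ->
  [\/ a1 = a2, a2 = a3 | a1 = a3] -> qeq (Sgn false (a1 ++ a2 ++ a3)) (Zero d).
Proof.
move=> a1_closed a2_closed a3_closed [<- | <- | <-].
- exact/rst_step/(qs_sq _ a1_closed a3_closed).
- apply: (rst_trans _ _ _ (Sgn false ((a2 ++ a2) ++ a1))).
    apply: qeq_rot; rewrite ?(closed_at_path a1_closed) //.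
      exact: closed_at_path (closed_at_cat a2_closed a2_closed).
    exact: closed_at_closedp (closed_at_cat a1_closed (closed_at_cat a2_closed a2_closed)).
  by rewrite -catA; apply/rst_step/(qs_sq _ a2_closed a1_closed).
- apply: (rst_trans _ _ _ (Sgn false (a1 ++ a1 ++ a2))).
    rewrite catA; apply: qeq_rot; rewrite ?(closed_at_path a1_closed) //.
      exact: closed_at_path (closed_at_cat a1_closed a2_closed).
    exact: closed_at_closedp (closed_at_cat (closed_at_cat a1_closed a2_closed) a1_closed).
  exact/rst_step/(qs_sq _ a1_closed a2_closed).
Qed.

End Equivalence.

Section BackwardUniqueness.
Variables (n d : nat) (Q : quiver n d) (G : pred 'I_n).
Hypothesis G_inj : forall x y, G (hd Q x) -> hd Q x = hd Q y -> x = y.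

Lemma is_path_rcons2 p z y : is_path Q (rcons (rcons p z) y) ->
  is_path Q (rcons p z) /\ hd Q z = tl Q y.
Proof.
rewrite -[rcons (rcons p z) y]cats1 is_path_cat ?rcons_neq_nil // pend_rcons /=.
by case/andP=> -> /eqP[].
Qed.

Lemma ptail_rcons2 p z y : ptail Q (rcons (rcons p z) y) = ptail Q (rcons p z).
Proof. by rewrite -cats1 ptail_cat ?rcons_neq_nil. Qed.

(* Walking backwards from y, each arrow is forced as long as its head lies in G. *)
Lemma rcons_path_unique s p q y : ~~ G s ->
  is_path Q (rcons p y) -> is_path Q (rcons q y) ->
  ptail Q (rcons p y) = Some s -> ptail Q (rcons q y) = Some s ->
  all (G \o hd Q) p -> all (G \o hd Q) q -> p = q.
Proof.
move=> Gs; elim/last_ind: p q y => [|p z IH] q y.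
  case/lastP: q => [//|q z] _ /is_path_rcons2[_ hd_z] /= [tl_y] _ _.
  by rewrite all_rcons /= hd_z tl_y (negbTE Gs).
case/lastP: q => [|q z'] p_path q_path.
  move=> _ /= [tl_y]; case/is_path_rcons2: p_path => _ hd_z.
  by rewrite all_rcons /= hd_z tl_y (negbTE Gs).
rewrite !ptail_rcons2 => p_tl q_tl; rewrite !all_rcons => /andP[G_z p_G] /andP[_ q_G].
case/is_path_rcons2: p_path => p_path hd_z; case/is_path_rcons2: q_path => q_path hd_z'.
have z_z' : z = z' by apply: G_inj G_z _; rewrite hd_z hd_z'.
by subst z'; rewrite (IH q z).
Qed.

End BackwardUniqueness.

Lemma downward_ind (P : nat -> Prop) N : (forall i, i.+1 < N -> P i.+1 -> P i) ->
  forall j, j < N -> P j -> forall i, i <= j -> P i.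
Proof.
move=> step; elim=> [|j IH] ltjN Pj i; first by rewrite leqn0 => /eqP->.
rewrite leq_eqVlt => /predU1P[-> // | ]; rewrite ltnS.
by move=> le_ij; apply: IH (ltnW ltjN) (step _ ltjN Pj) _ le_ij.
Qed.

Section HamiltonianCycle.
Variables (n d : nat) (Q : quiver n d) (C : seq 'I_d).
Hypotheses (C_prim : primitive Q C) (C_size : size C = n).
Local Notation visits := (visits Q).

Lemma visits_cycle_hd x : x \in C -> visits (hd Q x) C = 1.
Proof.
move=> xC; case/andP: C_prim => _ /allP C_visits; apply/eqP/C_visits; move: xC.
by case: C => // c C' xC; rewrite inE map_f ?orbT.
Qed.

Lemma cycle_hd_inj : {in C &, injective (hd Q)}.
Proof.
move=> x y xC yC hd_xy.
have : size (filter (fun a => hd Q a == hd Q x) C) = 1.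
  by rewrite size_filter; exact: visits_cycle_hd.
have : x \in filter (fun a => hd Q a == hd Q x) C by rewrite mem_filter eqxx.
have : y \in filter (fun a => hd Q a == hd Q x) C by rewrite mem_filter hd_xy eqxx.
by case: filter => [|z [|]] //; rewrite !inE => /eqP-> /eqP->.
Qed.

Lemma cycle_hd_uniq : uniq (map (hd Q) C).
Proof.
apply: count_mem_uniq => u; have [/mapP[x xC ->] | u_notin] := boolP (u \in _).
  by rewrite count_map /= -(visits_cycle_hd xC); apply: eq_count => a /=; rewrite eq_sym.
exact/count_memPn.
Qed.

Lemma cycle_hd_surj u : u \in map (hd Q) C.
Proof.
have le_size : size (enum 'I_n) <= size (map (hd Q) C).
  by rewrite size_enum_ord size_map C_size.
have [_ ->] := uniq_min_size cycle_hd_uniq (fun x _ => mem_enum _ x) le_size.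
by rewrite mem_enum.
Qed.

Lemma notin_cycle_eq x y : d <= n.+1 -> x \notin C -> y \notin C -> x = y.
Proof.
move=> le_d xC yC; have C_uniq : uniq C := map_uniq cycle_hd_uniq.
have : #|[predC C]| <= 1.
  by rewrite -(leq_add2l n) -{1}C_size -(card_uniqP C_uniq) cardC card_ord addn1.
by move/card_le1_eqP; apply; rewrite inE.
Qed.

(* The vertices visited by such a path are closed under taking the tail of the
   unique cycle arrow entering them, and going backwards along C reaches every vertex. *)
Lemma closedp_sub_cycle_visits p u : closedp Q p -> {subset p <= C} -> 0 < visits u p.
Proof.
move=> p_closed pC; have C_closed : closedp Q C by case/andP: C_prim.
case C_eq: C C_closed => [//|c C'] C_closed.
pose S i := has (fun a => hd Q a == hd Q (nth c C i)) p.
have step i : i.+1 < size C -> S i.+1 -> S i.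
  move=> lt_iC /hasP[z zp /eqP hd_z].
  have z_i : z = nth c C i.+1 := cycle_hd_inj (pC _ zp) (mem_nth c lt_iC) hd_z.
  have := closedp_visits_tl p_closed zp; rewrite -has_count z_i.
  move: C_closed lt_iC; rewrite /S C_eq => /andP[C_path _] lt_iC.
  by rewrite -(eqP (pathP c C_path i lt_iC)).
have S0 : S 0.
  have [z0 z0p] : exists z0, z0 \in p.
    by case: (p) p_closed => // z0 ? _; exists z0; exact: mem_head.
  have /(nthP c)[j ltjC eq_j] := pC z0 z0p.
  apply: (downward_ind step ltjC) => //.
  by apply/hasP; exists z0; rewrite ?eq_j.
have Slast : S (size C).-1.
  move: S0; rewrite /S nth_last C_eq /= => /hasP[z zp /eqP hd_z].
  have z_c : z = c by apply: (cycle_hd_inj (pC _ zp)); rewrite // C_eq mem_head.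
  move: (closedp_visits_tl p_closed zp) C_closed; rewrite z_c -has_count.
  by move=> + /andP[_ /eqP->].
rewrite -has_count; have /mapP[x /(nthP c)[i ltiC <-] ->] := cycle_hd_surj u.
apply: (downward_ind step _ Slast); first by rewrite C_eq.
by rewrite -ltnS prednK // C_eq.
Qed.

Variables (w : 'I_n) (char2 : bool).
Hypothesis off_cycle_hd : forall x, x \notin C -> hd Q x = w.
Local Notation qeq := (clos_refl_sym_trans (selt d) (qstep Q char2)).

Lemma closed_at_visits_target v a : closed_at Q v a -> 0 < visits w a.
Proof.
move=> a_closed; have [/allP a_C | ] := boolP (all (mem C) a).
  exact: closedp_sub_cycle_visits (closed_at_closedp a_closed) a_C.
rewrite -has_predC /visits -has_count => /hasP[x xa xC].
by apply/hasP; exists x; rewrite ?off_cycle_hd.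
Qed.

Lemma visits3_target v h : closedp Q h -> 2 < visits v h -> 2 < visits w h.
Proof.
move=> h_closed gt2.
have [h' [h'_closed visits_h' _]] := rotate_closed_at false h_closed (ltnW (ltnW gt2)).
rewrite -(visits_h' v) in gt2; rewrite -(visits_h' w).
have [a1 [a2 [a3 [-> [a1_closed a2_closed a3_closed] _]]]] := split3_closed_at h'_closed gt2.
rewrite !visits_cat.
have := closed_at_visits_target a1_closed; have := closed_at_visits_target a2_closed.
have := closed_at_visits_target a3_closed; rewrite !lt0n.
case: (visits w a3) => // ? _; case: (visits w a2) => // ? _.
by case: (visits w a1) => // ? _; rewrite !addSn !addnS.
Qed.

Hypothesis d_le : d <= n.+1.

(* The last arrow is either the off-cycle arrow or the cycle arrow into w. *)
Lemma closed_at_visits1_repeat a1 a2 a3 :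
  closed_at Q w a1 -> closed_at Q w a2 -> closed_at Q w a3 ->
  visits w a1 = 1 -> visits w a2 = 1 -> visits w a3 = 1 ->
  [\/ a1 = a2, a2 = a3 | a1 = a3].
Proof.
have G_inj x y : hd Q x != w -> hd Q x = hd Q y -> x = y.
  move=> hd_x hd_xy; apply: (cycle_hd_inj _ _ hd_xy).
    by apply: contraR hd_x => /off_cycle_hd->.
  by rewrite hd_xy in hd_x; apply: contraR hd_x => /off_cycle_hd->.
have piece_eq p y p' y' : closed_at Q w (rcons p y) -> closed_at Q w (rcons p' y') ->
    all (fun x => hd Q x != w) p -> all (fun x => hd Q x != w) p' ->
    hd Q y = w -> hd Q y' = w -> (y \in C) = (y' \in C) -> rcons p y = rcons p' y'.
  move=> a_closed a'_closed p_w p'_w hd_y hd_y' yC_y'C.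
  have y_y' : y = y'.
    case yC: (y \in C) yC_y'C => y'C.
      exact: cycle_hd_inj yC (esym y'C) (etrans hd_y (esym hd_y')).
    exact: notin_cycle_eq d_le (negbT yC) (negbT (esym y'C)).
  move: a_closed a'_closed; rewrite !closed_atE y_y'.
  case/and3P=> p_path /eqP p_tl _ /and3P[p'_path /eqP p'_tl _]; congr rcons.
  apply: (rcons_path_unique (G := fun v => v != w) G_inj (s := w) (y := y')) => //.
  by rewrite negbK.
move=> a1_closed a2_closed a3_closed visits_a1 visits_a2 visits_a3.
have [p1 [y1 [a1_eq hd_y1 p1_w]]] := closed_at_visits1 a1_closed visits_a1.
have [p2 [y2 [a2_eq hd_y2 p2_w]]] := closed_at_visits1 a2_closed visits_a2.
have [p3 [y3 [a3_eq hd_y3 p3_w]]] := closed_at_visits1 a3_closed visits_a3.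
subst a1 a2 a3.
case: (y1 \in C) / idP => y1C; case: (y2 \in C) / idP => y2C; case: (y3 \in C) / idP => y3C.
all: first [ apply: Or31; apply: piece_eq => //; apply/idP/idP; tauto
           | apply: Or32; apply: piece_eq => //; apply/idP/idP; tauto
           | apply: Or33; apply: piece_eq => //; apply/idP/idP; tauto ].
Qed.

Lemma qeq0_target_visits3 h : closedp Q h -> visits w h = 3 ->
  qeq (Sgn false h) (Zero d).
Proof.
move=> h_closed visits3; have gt0 : 0 < visits w h by rewrite visits3.
have [h' [h'_closed visits_h' h_h']] := rotate_closed_at char2 h_closed gt0.
apply: rst_trans h_h' _; rewrite -visits_h' in visits3.
have [a1 [a2 [a3 [h'_eq [a1_closed a2_closed a3_closed] [visits_a1 visits_a2]]]]] :=
  split3_closed_at h'_closed (ltac:(by rewrite visits3)).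
have visits_a3 : visits w a3 = 1.
  by move: visits3; rewrite h'_eq !visits_cat visits_a1 visits_a2 => -[].
rewrite h'_eq; apply: (qeq0_repeated char2 a1_closed a2_closed a3_closed).
exact: closed_at_visits1_repeat a1_closed a2_closed a3_closed visits_a1 visits_a2 visits_a3.
Qed.

End HamiltonianCycle.

Lemma qeq0_hamiltonian n d (Q : quiver n d) (C : seq 'I_d) (char2 : bool) v h :
  primitive Q C -> size C = n -> d <= n.+1 -> ~~ char2 ->
  closedp Q h -> 2 < visits Q v h ->
  clos_refl_sym_trans (selt d) (qstep Q char2) (Sgn false h) (Zero d).
Proof.
move=> C_prim C_size d_le not_char2 h_closed gt2.
have [w off_cycle_hd] : exists w, forall x, x \notin C -> hd Q x = w.
  case: (pickP [pred x | x \notin C]) => [b /= bC | all_C].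
    by exists (hd Q b) => x xC; rewrite (notin_cycle_eq C_prim C_size d_le xC bC).
  by exists v => x; move: (all_C x) => /= ->.
have := visits3_target C_prim C_size off_cycle_hd h_closed gt2.
rewrite leq_eqVlt => /predU1P[visits3 | gt3].
  exact: (qeq0_target_visits3 C_prim C_size char2 off_cycle_hd d_le h_closed (esym visits3)).
exact: qeq0_visits4 not_char2 h_closed gt3.
Qed.

Theorem lemma2p4 (K : fieldType)
  (K_infinite : forall s : seq K, exists x : K, x \notin s)
  (K_char : (2 \notin [pchar K]%R)%N)
  (n d m : nat) (Q : quiver n d) (HQ : in_Qndm Q m)
  (h : seq 'I_d) (h_closed : closedp Q h)
  (h_nz : ~ qequiv Q K (Sgn false h) (Zero _)) :
  deg h <= Mbound n d m.
Proof.
rewrite /deg /Mbound; apply: contraT; rewrite -ltnNge => gt_bound; case: h_nz.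
case: ifP gt_bound => [/andP[/eqP n_m d_n] | _] gt_bound.
- subst m; case: HQ => _ [[C [C_prim C_size]] _].
  have [v gt2] := visits_pigeonhole Q gt_bound.
  apply: qeq0_hamiltonian C_prim C_size _ K_char h_closed gt2.
  by case/orP: d_n => /eqP->.
- have [v gt3] := visits_pigeonhole Q gt_bound.
  exact: qeq0_visits4 K_char h_closed gt3.
Qed.
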